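(* Let $\mathbb{A}=(\mathbb{L},(\lozenge_i)_{i\in\mathsf{Ag}},(\Box_i)_{i\in\mathsf{Ag}})$ be an epistemic Heyting algebra and $a\in\mathbb{A}$. Then the pseudo-quotient algebra $\mathbb{A}^a$ is an epistemic Heyting algebra.
   Context: Fix a set $\mathsf{Ag}$ of agents. A monadic Heyting algebra is a Heyting algebra $\mathbb{L}$ with, for each $i\in\mathsf{Ag}$, monotone unary operations $\lozenge_i,\Box_i$ such that for all $a,b$: $a\leq\lozenge_i a$; $\Box_i a\leq a$; $\lozenge_i(a\vee b)\leq\lozenge_i a\vee\lozenge_i b$; $\Box_i(a\to b)\leq\Box_i a\to\Box_i b$; $\lozenge_i a\leq\Box_i\lozenge_i a$; $\lozenge_i\Box_i a\leq\Box_i a$; $\Box_i(a\to b)\leq\lozenge_i a\to\lozenge_i b$; $\lozenge_i\bot\leq\bot$; $\top\leq\Box_i\top$. An epistemic Heyting algebra is a finite monadic Heyting algebra with $\lozenge_i a\vee\neg\lozenge_i a=\top$ for all $i,a$. The pseudo-quotient algebra $\mathbb{A}^a=(\mathbb{L}/{\cong_a},(\lozenge^a_i),(\Box^a_i))$: $b\cong_a c$ iff $b\wedge a=c\wedge a$; $\mathbb{L}/{\cong_a}$ is the quotient Heyting algebra (writing $[c]$ for the class of $c$); and $\lozenge^a_i[b]=[\lozenge_i(b\wedge a)]$, $\Box^a_i[b]=[\Box_i(a\to b)]$. *)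

From mathcomp Require Import all_boot.
Set Implicit Arguments. Unset Strict Implicit. Unset Printing Implicit Defensive.

Record HAops (T : Type) := HAOps {
  meet : T -> T -> T; join : T -> T -> T; imp : T -> T -> T; top : T; bot : T }.

Definition hle T (o : HAops T) (x y : T) : Prop := meet o x y = x.
Definition hneg T (o : HAops T) (x : T) : T := imp o x (bot o).

Definition is_HA T (o : HAops T) : Prop :=
  (forall x y z, meet o x (meet o y z) = meet o (meet o x y) z) /\
      (forall x y z, join o x (join o y z) = join o (join o x y) z) /\
      (forall x y, meet o x y = meet o y x) /\
      (forall x y, join o x y = join o y x) /\
      (forall x y, meet o x (join o x y) = x) /\
      (forall x y, join o x (meet o x y) = x) /\
      (forall x, hle o (bot o) x /\ hle o x (top o)) /\
      (forall a b c, hle o (meet o c a) b <-> hle o c (imp o a b)).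

Record MHAops (Ag T : Type) := MHAOps {
  ha : HAops T; dia : Ag -> T -> T; box : Ag -> T -> T }.

Definition is_MHA Ag T (A : MHAops Ag T) : Prop :=
  let o := ha A in let le := hle o in
  is_HA o /\
  forall i : Ag,
  (forall a b, le a b -> le (dia A i a) (dia A i b)) /\
      (forall a b, le a b -> le (box A i a) (box A i b)) /\
      (forall a, le a (dia A i a)) /\
      (forall a, le (box A i a) a) /\
      (forall a b, le (dia A i (join o a b)) (join o (dia A i a) (dia A i b))) /\
      (forall a b, le (box A i (imp o a b)) (imp o (box A i a) (box A i b))) /\
      (forall a, le (dia A i a) (box A i (dia A i a))) /\
      (forall a, le (dia A i (box A i a)) (box A i a)) /\
      (forall a b, le (box A i (imp o a b)) (imp o (dia A i a) (dia A i b))) /\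
      le (dia A i (bot o)) (bot o) /\
      le (top o) (box A i (top o)).

Definition is_EHA Ag (T : finType) (A : MHAops Ag T) : Prop :=
  is_MHA A /\
  forall i a, join (ha A) (dia A i a) (hneg (ha A) (dia A i a)) = top (ha A).

Section PseudoQuotient.
Variables (Ag : Type) (L : finType) (A : MHAops Ag L) (a : L).
Let o := ha A.

Definition cls (b : L) : {set L} := [set c | meet o c a == meet o b a].

(* carrier of L/≅_a: the set of equivalence classes *)
Definition qcar := {X : {set L} | [exists b, X == cls b]}.

Lemma cls_qcar (b : L) : [exists b', cls b == cls b'].
Proof. by apply/existsP; exists b. Qed.

Definition qcls (b : L) : qcar := exist _ (cls b) (cls_qcar b).

Definition rep (X : qcar) : L := odflt (top o) [pick x in val X].

Definition quot_ops : HAops qcar :=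
  HAOps (fun X Y => qcls (meet o (rep X) (rep Y)))
        (fun X Y => qcls (join o (rep X) (rep Y)))
        (fun X Y => qcls (imp o (rep X) (rep Y)))
        (qcls (top o)) (qcls (bot o)).

Definition pseudo_quotient : MHAops Ag qcar :=
  MHAOps quot_ops
    (fun i X => qcls (dia A i (meet o (rep X) a)))
    (fun i X => qcls (box A i (imp o a (rep X)))).
End PseudoQuotient.

From mathcomp Require Import all_boot.
Set Implicit Arguments. Unset Strict Implicit. Unset Printing Implicit Defensive.

(* Since [b] = [c] iff b /\ a = c /\ a, the quotient L/~a behaves like the
   down-set of a with relativized operations: [b] <= [c] iff b /\ a <= c, and
   the identity (b -> c) /\ a = ((b /\ a) -> (c /\ a)) /\ a makes the
   implication well defined.  Every axiom of A^a therefore becomes an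
   inequality in L, which is the corresponding axiom of A instantiated at
   b /\ a (for diamonds) or a -> b (for boxes), weakened by monotonicity and
   elementary Heyting laws.  The law <>x \/ ~<>x = T is inherited because
   the quotient map preserves joins, implication and bottom. *)

(* Makes the Heyting-algebra hypothesis an implicit, inferred argument of the
   general lemmas below. *)
Existing Class is_HA.

Section HeytingLattice.
Context {T : Type} {o : HAops T} {HA : is_HA o}.

Local Notation "x ⊓ y" := (meet o x y) (at level 40, left associativity).
Local Notation "x ⊔ y" := (join o x y) (at level 50, left associativity).
Local Notation "x ⇒ y" := (imp o x y) (at level 60, right associativity).
Local Notation "x ≤ y" := (hle o x y) (at level 70, no associativity).

Lemma meetA x y z : x ⊓ (y ⊓ z) = x ⊓ y ⊓ z. Proof. by case: HA. Qed.
Lemma joinA x y z : x ⊔ (y ⊔ z) = x ⊔ y ⊔ z. Proof. by case: HA => _ []. Qed.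
Lemma meetC x y : x ⊓ y = y ⊓ x. Proof. by case: HA => _ [_ []]. Qed.
Lemma joinC x y : x ⊔ y = y ⊔ x. Proof. by case: HA => _ [_ [_ []]]. Qed.
Lemma joinKI x y : x ⊓ (x ⊔ y) = x. Proof. by case: HA => _ [_ [_ [_ []]]]. Qed.
Lemma meetKU x y : x ⊔ (x ⊓ y) = x. Proof. by case: HA => _ [_ [_ [_ [_ []]]]]. Qed.
Lemma le0x x : bot o ≤ x. Proof. by case: HA => _ [_ [_ [_ [_ [_ [/(_ x) []]]]]]]. Qed.
Lemma lex1 x : x ≤ top o. Proof. by case: HA => _ [_ [_ [_ [_ [_ [/(_ x) []]]]]]]. Qed.
Lemma le_imp x y z : z ⊓ x ≤ y <-> z ≤ x ⇒ y.
Proof. by case: HA => _ [_ [_ [_ [_ [_ [_ ]]]]]]. Qed.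

Lemma meetxx x : x ⊓ x = x. Proof. by rewrite -{2}(meetKU x x) joinKI. Qed.
Lemma lexx x : x ≤ x. Proof. exact: meetxx. Qed.

Lemma le_trans y x z : x ≤ y -> y ≤ z -> x ≤ z.
Proof. by rewrite /hle => xy yz; rewrite -{1}xy -meetA yz xy. Qed.

Lemma le_anti x y : x ≤ y -> y ≤ x -> x = y.
Proof. by rewrite /hle => xy yx; rewrite -xy meetC yx. Qed.

Lemma leIl x y : x ⊓ y ≤ x. Proof. by rewrite /hle -meetA (meetC y) meetA meetxx. Qed.
Lemma leIr x y : x ⊓ y ≤ y. Proof. by rewrite /hle -meetA meetxx. Qed.
Lemma lexI x y z : z ≤ x -> z ≤ y -> z ≤ x ⊓ y.
Proof. by rewrite /hle => zx zy; rewrite meetA zx zy. Qed.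
Lemma leI2l x y z : x ≤ y -> x ⊓ z ≤ y ⊓ z.
Proof. by move=> xy; apply: lexI; [apply: le_trans xy; apply: leIl | apply: leIr]. Qed.

Lemma le_joinE x y : x ≤ y <-> x ⊔ y = y.
Proof. by split=> [<- | <-]; [rewrite joinC meetC meetKU | rewrite /hle joinKI]. Qed.
Lemma leUl x y : x ≤ x ⊔ y. Proof. exact: joinKI. Qed.
Lemma leUr x y : y ≤ x ⊔ y. Proof. by rewrite joinC; apply: leUl. Qed.
Lemma leUx x y z : x ≤ z -> y ≤ z -> x ⊔ y ≤ z.
Proof. by move=> /le_joinE xz /le_joinE yz; apply/le_joinE; rewrite -joinA yz xz. Qed.

End HeytingLattice.

Ltac solve_meet_le := match goal with
  | |- hle _ ?x ?x => apply: lexx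
  | |- hle _ _ (meet _ _ _) => apply: lexI; solve_meet_le
  | |- hle _ (meet _ ?x ?y) _ =>
      first [apply: le_trans (leIl x y) _; solve_meet_le
            | apply: le_trans (leIr x y) _; solve_meet_le]
  end.

Section HeytingImplication.
Context {T : Type} {o : HAops T} {HA : is_HA o}.

Local Notation "x ⊓ y" := (meet o x y) (at level 40, left associativity).
Local Notation "x ⊔ y" := (join o x y) (at level 50, left associativity).
Local Notation "x ⇒ y" := (imp o x y) (at level 60, right associativity).
Local Notation "x ≤ y" := (hle o x y) (at level 70, no associativity).

Lemma impI x y z : z ⊓ x ≤ y -> z ≤ x ⇒ y. Proof. by move/le_imp. Qed.
Lemma impE x y z : z ≤ x ⇒ y -> z ⊓ x ≤ y. Proof. by move/le_imp. Qed.
Lemma modus_ponens x y : (x ⇒ y) ⊓ x ≤ y. Proof. exact/impE/lexx. Qed.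

Lemma meetUl x y z : (x ⊔ y) ⊓ z = x ⊓ z ⊔ y ⊓ z.
Proof.
apply: le_anti; last by apply: leUx; apply: leI2l; [apply: leUl | apply: leUr].
by apply/impE/leUx; apply/impI; [apply: leUl | apply: leUr].
Qed.

Lemma meetI_distr x y a : x ⊓ y ⊓ a = (x ⊓ a) ⊓ (y ⊓ a).
Proof. by apply: le_anti; solve_meet_le. Qed.

Lemma meet_imp_distr x y a : (x ⇒ y) ⊓ a = ((x ⊓ a) ⇒ (y ⊓ a)) ⊓ a.
Proof.
apply: le_anti; apply: lexI; try apply: leIr; apply: impI.
  apply: lexI; last by solve_meet_le.
  by apply: le_trans (modus_ponens x y); solve_meet_le.
apply: le_trans (leIl y a); apply: le_trans (modus_ponens (x ⊓ a) (y ⊓ a)).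
by solve_meet_le.
Qed.

Lemma imp_meetr a x : a ⇒ x = a ⇒ (x ⊓ a).
Proof.
apply: le_anti; apply: impI; first by apply: lexI; [apply: modus_ponens | apply: leIr].
by apply: le_trans (modus_ponens _ _) _; apply: leIl.
Qed.

Lemma imp_imp_distr a x y : a ⇒ (x ⇒ y) ≤ (a ⇒ x) ⇒ (a ⇒ y).
Proof.
apply/impI/impI; apply: le_trans (modus_ponens x y).
apply: lexI; last by apply: le_trans (modus_ponens a x); solve_meet_le.
by apply: le_trans (modus_ponens a (x ⇒ y)); solve_meet_le.
Qed.

Lemma imp_imp_meet a x y : a ⇒ (x ⇒ y) ≤ (x ⊓ a) ⇒ (y ⊓ a).
Proof.
apply/impI/lexI; last by solve_meet_le.
apply: le_trans (modus_ponens x y).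
by apply: lexI; [apply: le_trans (modus_ponens a (x ⇒ y)) | ]; solve_meet_le.
Qed.

End HeytingImplication.

Section PseudoQuotient.
Variables (Ag : Type) (L : finType) (A : MHAops Ag L) (a : L).

Local Notation o := (ha A).
Local Notation "x ⊓ y" := (meet o x y) (at level 40, left associativity).
Local Notation "x ⊔ y" := (join o x y) (at level 50, left associativity).
Local Notation "x ⇒ y" := (imp o x y) (at level 60, right associativity).
Local Notation "x ≤ y" := (hle o x y) (at level 70, no associativity).
Local Notation PQ := (pseudo_quotient A a).
Local Notation Q := (ha PQ).
Local Notation qc := (qcls A a).

Lemma qcls_eq x y : qc x = qc y <-> x ⊓ a = y ⊓ a.
Proof.
split=> [qxy | xya]; last by apply: val_inj; apply/setP => c; rewrite !inE xya.
have : x \in cls A a y by rewrite -[cls A a y]/(val (qc y)) -qxy inE.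
by rewrite inE => /eqP.
Qed.

Lemma qcar_ind (P : qcar A a -> Prop) : (forall x, P (qc x)) -> forall X, P X.
Proof.
move=> Pqc [X clsX]; have /existsP[x /eqP X_cls] := clsX.
by have -> : exist _ X clsX = qc x by exact: val_inj.
Qed.

Lemma rep_meet x : rep (qc x) ⊓ a = x ⊓ a.
Proof. by rewrite /rep; case: pickP => [y | /(_ x)]; rewrite /= inE ?eqxx // => /eqP. Qed.

Context {HA : is_HA o}.

Lemma qmeetE x y : meet Q (qc x) (qc y) = qc (x ⊓ y).
Proof. by apply/qcls_eq; rewrite meetI_distr (meetI_distr x) !rep_meet. Qed.

Lemma qjoinE x y : join Q (qc x) (qc y) = qc (x ⊔ y).
Proof. by apply/qcls_eq; rewrite !meetUl !rep_meet. Qed.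

Lemma qimpE x y : imp Q (qc x) (qc y) = qc (x ⇒ y).
Proof. by apply/qcls_eq; rewrite meet_imp_distr (meet_imp_distr x) !rep_meet. Qed.

Lemma qleE x y : hle Q (qc x) (qc y) <-> x ⊓ a ≤ y.
Proof.
rewrite {1}/hle qmeetE; split => [/qcls_eq <- | xay]; first by solve_meet_le.
apply/qcls_eq/le_anti; first by solve_meet_le.
by apply: lexI; [apply: lexI; [apply: leIl | ] | apply: leIr].
Qed.

Lemma qdiaE i x : dia PQ i (qc x) = qc (dia A i (x ⊓ a)).
Proof. by rewrite /= rep_meet. Qed.

Lemma qboxE i x : box PQ i (qc x) = qc (box A i (a ⇒ x)).
Proof. by rewrite /= imp_meetr rep_meet -imp_meetr. Qed.

Lemma pseudo_quotient_HA : is_HA Q.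
Proof.
split; last split; last split; last split; last split; last split; last split.
- by elim/qcar_ind => x; elim/qcar_ind => y; elim/qcar_ind => z;
    rewrite !qmeetE meetA.
- by elim/qcar_ind => x; elim/qcar_ind => y; elim/qcar_ind => z;
    rewrite !qjoinE joinA.
- by elim/qcar_ind => x; elim/qcar_ind => y; rewrite !qmeetE meetC.
- by elim/qcar_ind => x; elim/qcar_ind => y; rewrite !qjoinE joinC.
- by elim/qcar_ind => x; elim/qcar_ind => y; rewrite qjoinE qmeetE joinKI.
- by elim/qcar_ind => x; elim/qcar_ind => y; rewrite qmeetE qjoinE meetKU.
- elim/qcar_ind => x; split; apply/qleE; [exact/le_trans/le0x/leIl | exact: lex1].
elim/qcar_ind => x; elim/qcar_ind => y; elim/qcar_ind => z.
rewrite qmeetE qimpE; split => [/qleE zxay | /qleE zay_xy]; apply/qleE.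
  by apply/impI; apply: le_trans zxay; solve_meet_le.
apply: le_trans (modus_ponens x y).
by apply: lexI; [apply: le_trans zay_xy | ]; solve_meet_le.
Qed.

Lemma pseudo_quotient_MHA : is_MHA A -> is_MHA PQ.
Proof.
case=> _ modal_laws; split; first exact: pseudo_quotient_HA.
move=> i; have [dia_mono [box_mono [dia_ext [box_red [dia_join [box_K
  [dia_box [dia_boxK [box_dia_K [dia_bot top_box]]]]]]]]]] := modal_laws i.
rewrite -[bot Q]/(qc (bot o)) -[top Q]/(qc (top o)).
do 10 try split.
- elim/qcar_ind => x; elim/qcar_ind => y; rewrite !qdiaE => /qleE xay; apply/qleE.
  exact: le_trans (leIl _ _) (dia_mono _ _ (lexI xay (leIr x a))).
- elim/qcar_ind => x; elim/qcar_ind => y; rewrite !qboxE => /qleE xay; apply/qleE.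
  apply: le_trans (leIl _ _) (box_mono _ _ (impI _)).
  exact: le_trans (lexI (modus_ponens a x) (leIr _ a)) xay.
- by elim/qcar_ind => x; rewrite qdiaE; apply/qleE/dia_ext.
- elim/qcar_ind => x; rewrite qboxE; apply/qleE.
  exact: le_trans (leI2l a (box_red _)) (modus_ponens a x).
- elim/qcar_ind => x; elim/qcar_ind => y; rewrite qjoinE !qdiaE qjoinE; apply/qleE.
  by rewrite meetUl; apply: le_trans (leIl _ _) (dia_join _ _).
- elim/qcar_ind => x; elim/qcar_ind => y; rewrite qimpE !qboxE qimpE; apply/qleE.
  apply: le_trans (leIl _ _) (le_trans _ (box_K _ _)).
  exact/box_mono/imp_imp_distr.
- elim/qcar_ind => x; rewrite qdiaE qboxE; apply/qleE.
  apply: le_trans (leIl _ _) (le_trans (dia_box _) _).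
  exact/box_mono/impI/leIl.
- elim/qcar_ind => x; rewrite qboxE qdiaE; apply/qleE.
  exact: le_trans (leIl _ _) (le_trans (dia_mono _ _ (leIl _ _)) (dia_boxK _)).
- elim/qcar_ind => x; elim/qcar_ind => y; rewrite qimpE qboxE !qdiaE qimpE; apply/qleE.
  apply: le_trans (leIl _ _) (le_trans _ (box_dia_K _ _)).
  exact/box_mono/imp_imp_meet.
- rewrite qdiaE; apply/qleE.
  exact: le_trans (leIl _ _) (le_trans (dia_mono _ _ (leIl _ _)) dia_bot).
rewrite qboxE; apply/qleE.
apply: le_trans (leIl _ _) (le_trans top_box _).
exact/box_mono/impI/lex1.
Qed.

Lemma pseudo_quotient_dia_em :
    (forall i x, dia A i x ⊔ hneg o (dia A i x) = top o) ->
  forall i X, join Q (dia PQ i X) (hneg Q (dia PQ i X)) = top Q.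
Proof.
move=> dia_em i; elim/qcar_ind => x.
by rewrite qdiaE /hneg -[bot Q]/(qc (bot o)) qimpE qjoinE dia_em.
Qed.

End PseudoQuotient.

Theorem proposition8 (Ag : Type) (L : finType) (A : MHAops Ag L) (a : L) :
  is_EHA A -> is_EHA (pseudo_quotient A a).
Proof.
case=> MHA dia_em; have HA := MHA.1.
split; [exact: pseudo_quotient_MHA | exact: pseudo_quotient_dia_em].
Qed.
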